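(* Let $\mathsf{X}$ be a finite connected graph with no tails and with $l$ ramified vertices, and suppose $\mathsf{X}$ has a segment decomposition with segments $\mathsf{S}^1,\dots,\mathsf{S}^k$ (arranged so that $\mathsf{S}^1,\dots,\mathsf{S}^{k'}$ are 2-segments and $\mathsf{S}^{k'+1},\dots,\mathsf{S}^k$ are 1-segments); let $t_i$ be the number of ramified vertices of $\mathsf{S}^i$. Let $\mathsf{X}_n$ be the $n$-th layer of the corresponding $\mathbb{Z}_p$-tower with trivial voltage assignment, and assume all ramified vertices are totally ramified. Then \[\kappa(\mathsf{X}_n)=\kappa(\mathsf{X})\cdot p^{n(l-1)}\prod_{i=1}^k F_{t_i}(\mathsf{S}^i)^{p^n-1}.\]
   Context: Graphs are finite and undirected, possibly with multiple edges and loops; $\kappa(\cdot)$ denotes the number of spanning trees. Ramified/unramified vertices, tails, admissible paths and segment decompositions: a tail is an unramified vertex with exactly one neighbour joined to it by exactly one edge; for ramified $v,v'$ an admissible path is a path from $v$ to $v'$ with all intermediate vertices unramified (closed if $v=v'$). Colour each admissible path between distinct ramified vertices so that paths sharing an edge receive the same colour; a decomposition exists only if each colour class joins a single pair of ramified vertices, and each class is a 2-segment. Every remaining edge lies on an admissible closed path at one ramified vertex through unramified vertices outside the 2-segments; colouring these likewise (sharing an edge forces the same colour, no coloured edge reused) gives the 1-segments. Segments are edge-disjoint, share no unramified vertex and cover $\mathsf{X}$. For a graph $\mathsf{S}$ with $t\in\{1,2\}$ marked (ramified) vertices, $F_t(\mathsf{S})$ is the number of spanning forests of $\mathsf{S}$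 with $t$ trees each containing exactly one marked vertex ($F_1=\kappa$). $\mathbb{Z}_p$-towers: $\Gamma\cong\mathbb{Z}_p$ (multiplicative), $\Gamma_n=\Gamma/\Gamma^{p^n}$, $\pi_n:\Gamma\to\Gamma_n$. A voltage assignment is $\alpha$ from directed edges to $\Gamma$ with $\alpha(\bar e)=\alpha(e)^{-1}$; trivial means $\alpha\equiv 1$. Each vertex $v$ has a closed subgroup $I_v\subseteq\Gamma$; $v$ is ramified iff $I_v\neq 1$, totally ramified iff $I_v=\Gamma$. The layer $\mathsf{X}_n$ has vertices $\bigsqcup_v\{v\}\times\Gamma_n/\pi_n(I_v)$ and directed edges $\mathbf{E}(\mathsf{X})\times\Gamma_n$, where $(e,g)$ goes from $(o(e),g\pi_n(I_{o(e)}))$ to $(t(e),g\pi_n(\alpha(e))\pi_n(I_{t(e)}))$ and $\overline{(e,g)}=(\bar e,g\pi_n(\alpha(e)))$; all $\mathsf{X}_n$ are assumed connected. *)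

From HB Require Import structures.
From mathcomp Require Import all_boot all_order all_algebra.
Set Implicit Arguments.
Unset Strict Implicit.
Unset Printing Implicit Defensive.
Import GRing.Theory.

(* A finite graph (multiple edges and loops allowed) in Serre's style:
   a finite vertex type, a finite type of directed edges (darts), the origin
   map o and the inversion e |-> ebar.
   An undirected edge is an orbit {e, ebar}. *)
Record graph := Graph {
  vtx : finType;
  drt : finType;
  org : drt -> vtx;
  rev : drt -> drt }.
Arguments org {g}.
Arguments rev {g}.

Definition is_graph (G : graph) : Prop :=
  involutive (@rev G) /\ forall d : drt G, rev d != d.

Definition tgt (G : graph) (d : drt G) : vtx G := org (rev d).

(* sets of undirected edges are represented by inversion-closed sets of darts *)
Definition rev_closed (G : graph) (F : {set drt G}) : bool :=
  [forall d in F, rev d \in F].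

Definition adj (G : graph) (F : {set drt G}) : rel (vtx G) :=
  fun x y => [exists d in F, (org d == x) && (tgt d == y)].

Definition connectedb (G : graph) (F : {set drt G}) : bool :=
  [forall x, [forall y, connect (adj F) x y]].

(* F is (the edge set of) a forest: acyclic, i.e. no edge of F lies on a
   cycle of F, i.e. removing any edge of F disconnects its endpoints
   (in particular F contains no loop). *)
Definition forest (G : graph) (F : {set drt G}) : bool :=
  rev_closed F &&
  [forall d in F, ~~ connect (adj (F :\: [set d; rev d])) (org d) (tgt d)].

Definition spanning_tree (G : graph) (T : {set drt G}) : bool :=
  forest T && connectedb T.

Definition kappa (G : graph) : nat := #|[set T : {set drt G} | spanning_tree T]|.

Definition verts (G : graph) (S : {set drt G}) : {set vtx G} :=
  [set org d | d in S].

Definition rooted_forest (G : graph) (S : {set drt G}) (M : {set vtx G})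
    (F : {set drt G}) : bool :=
  [&& F \subset S, forest F,
      [forall x in verts S, [exists m in M, connect (adj F) x m]]
    & [forall m in M, [forall m' in M, connect (adj F) m m' ==> (m == m')]]].

(* F_t(S) with t = #|M| *)
Definition Fcount (G : graph) (S : {set drt G}) (M : {set vtx G}) : nat :=
  #|[set F : {set drt G} | rooted_forest S M F]|.

Definition nbrs (G : graph) (v : vtx G) : {set vtx G} :=
  [set tgt d | d in [set d : drt G | org d == v]].

Definition tail (G : graph) (R : {set vtx G}) (v : vtx G) : bool :=
  [&& v \notin R, #|nbrs v| == 1 &
      [forall u in nbrs v, #|[set d : drt G | (org d == v) && (tgt d == u)]| == 1]].

Definition seg_ram (G : graph) (R : {set vtx G}) (S : {set drt G}) : {set vtx G} :=
  verts S :&: R.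

(* two darts of S are linked if they are inverse to each other or leave the
   same unramified vertex (i.e. are consecutive on a path through an
   unramified vertex) *)
Definition link (G : graph) (R : {set vtx G}) (S : {set drt G}) : rel (drt G) :=
  fun d d' => [&& d \in S, d' \in S &
                  (d' == rev d) || ((org d == org d') && (org d \notin R))].

(* A segment decomposition of G (w.r.t. the ramified set R) with segments
   S 0, ..., S (k-1) given by their edge sets. *)
Definition segment_decomposition (G : graph) (R : {set vtx G}) (k : nat)
    (S : 'I_k -> {set drt G}) : Prop :=
  [/\ forall i, rev_closed (S i) && (S i != set0),
      forall i j, i != j -> [disjoint S i & S j],
      forall d : drt G, (exists i, d \in S i) &
      forall i j (v : vtx G), i != j -> v \notin R -> v \in verts (S i) ->
         v \notin verts (S j)] /\
  (forall i, {in S i &, forall d d', connect (link R (S i)) d d'}) /\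
  (forall i, (#|seg_ram R (S i)| == 1) || (#|seg_ram R (S i)| == 2)).

(* Gamma_n = Gamma / Gamma^{p^n} ~ Z/p^nZ, written additively *)
Definition Gam (p n : nat) := 'I_((p ^ n).-1.+1).

Definition coset (p n : nat) (H : {set Gam p n}) (g : Gam p n) : {set Gam p n} :=
  [set h : Gam p n | (h - g)%R \in H].

(* vertices of X_n: pairs (v, g pi_n(I_v)), H v standing for pi_n(I_v) *)
Definition lvtx (G : graph) (p n : nat) (H : vtx G -> {set Gam p n}) :=
  {x : vtx G * {set Gam p n} | [exists g, x.2 == coset (H x.1) g]}.

Lemma coset_ex (G : graph) (p n : nat) (H : vtx G -> {set Gam p n})
  (v : vtx G) (g : Gam p n) :
  [exists g', (v, coset (H v) g).2 == coset (H (v, coset (H v) g).1) g'].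
Proof. by apply/existsP; exists g. Qed.

Definition lorg (G : graph) (p n : nat) (H : vtx G -> {set Gam p n})
  (d : drt G * Gam p n) : lvtx H :=
  exist _ (org d.1, coset (H (org d.1)) d.2) (coset_ex H (org d.1) d.2).

Definition lrev (G : graph) (p n : nat) (alpha : drt G -> Gam p n)
  (d : drt G * Gam p n) : drt G * Gam p n :=
  (rev d.1, (d.2 + alpha d.1)%R).

(* The n-th layer X_n for a voltage assignment alpha (already projected to
   Gamma_n: alpha = pi_n o alpha) and H v = pi_n(I_v):
   directed edges E(X) x Gamma_n, (e,g) from (o e, g H(o e)),
   inverse (ebar, g alpha(e)). *)
Definition layer (G : graph) (p n : nat) (alpha : drt G -> Gam p n)
  (H : vtx G -> {set Gam p n}) : graph :=
  @Graph (lvtx H) (drt G * Gam p n)%type (@lorg G p n H) (@lrev G p n alpha).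

(* the layer of the Z_p-tower with trivial voltage assignment in which every
   ramified vertex (those in R) is totally ramified (I_v = Gamma, so
   pi_n(I_v) = Gamma_n) and the others are unramified (I_v = 1) *)
Definition trivial_layer (G : graph) (R : {set vtx G}) (p n : nat) : graph :=
  layer (fun _ : drt G => 0%R : Gam p n)
        (fun v => if v \in R then [set: Gam p n] else [set 0%R]).

From mathcomp Require Import all_boot all_order all_algebra.
Set Implicit Arguments.
Unset Strict Implicit.
Unset Printing Implicit Defensive.
Import GRing.Theory.

(* A spanning tree T of X is determined by its traces T :&: S on the segments.
   Each trace is a forest of S in which every vertex reaches a ramified vertex
   of S, and the 2-segments whose trace joins their two ramified vertices form a
   spanning tree C of the multigraph on the ramified vertices having one edge
   per 2-segment; conversely such local data glue to a spanning tree of X.  So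
   kappa(X) is a sum over the trees C of products of local counts, a segment
   outside C contributing F_t(S).
   With trivial voltages and total ramification, X_n is decomposed into p^n
   copies of each segment of X with the same ramified vertices, so its
   multigraph has p^n parallel copies of every edge.  A tree of it chooses one
   copy of each edge of a tree C of the multigraph of X, and each of the other
   copies contributes F_t(S).  Every tree C has l - 1 edges, so the factor
   p^(n(l-1)) prod F_t(S)^(p^n-1) comes out of the sum, leaving kappa(X). *)

Section GraphBasics.
Variable G : graph.
Hypothesis revK : involutive (@rev G).
Implicit Types (F : {set drt G}) (x y : vtx G) (d : drt G).

Lemma adjP F x y :
  reflect (exists2 d, d \in F & org d = x /\ tgt d = y) (adj F x y).
Proof.
apply: (iffP existsP) => [[d /andP[dF /andP[/eqP<- /eqP<-]]]|[d dF [<- <-]]].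
  by exists d.
by exists d; rewrite dF !eqxx.
Qed.

Lemma adjS F F' : F \subset F' -> subrel (adj F) (adj F').
Proof.
move=> sFF' x y /adjP[d dF [<- <-]]; apply/adjP; exists d => //.
exact: (subsetP sFF').
Qed.

Lemma connect_adjS F F' : F \subset F' ->
  subrel (connect (adj F)) (connect (adj F')).
Proof. by move=> sFF'; apply: connect_sub => x y /(adjS sFF') /connect1. Qed.

Lemma rev_closedP F : reflect {in F, forall d, rev d \in F} (rev_closed F).
Proof.
apply: (iffP forallP) => [H d dF|H d]; first by have := H d; rewrite dF.
by apply/implyP => /H.
Qed.

Lemma rev_closedI F F' : rev_closed F -> rev_closed F' -> rev_closed (F :&: F').
Proof.
move=> /rev_closedP rcF /rev_closedP rcF'; apply/rev_closedP => d.
by rewrite !inE => /andP[/rcF -> /rcF' ->].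
Qed.

Lemma rev_closedD2 F d : rev_closed F -> rev_closed (F :\: [set d; rev d]).
Proof.
move=> /rev_closedP rcF; apply/rev_closedP => e; rewrite !inE !negb_or.
case/andP => /andP[ne1 ne2] eF; rewrite rcF // andbT; apply/andP; split.
  by apply: contra ne2 => /eqP<-; rewrite revK.
by apply: contra ne1 => /eqP/(congr1 rev); rewrite !revK => ->.
Qed.

Lemma tgt_rev d : tgt (rev d) = org d.
Proof. by rewrite /tgt revK. Qed.

Lemma adj_sym F : rev_closed F -> symmetric (adj F).
Proof.
move=> /rev_closedP rcF x y; apply/idP/idP => /adjP[d dF [<- <-]];
  by apply/adjP; exists (rev d); [apply: rcF | rewrite tgt_rev].
Qed.

Lemma connect_adj_sym F : rev_closed F -> connect_sym (adj F).
Proof. by move=> rcF; apply/sym_connect_sym/adj_sym. Qed.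

Lemma forestP F : forest F ->
  {in F, forall d, ~~ connect (adj (F :\: [set d; rev d])) (org d) (tgt d)}.
Proof. by case/andP=> _ /forallP fF d dF; have := fF d; rewrite dF. Qed.

Lemma forestS F F' : rev_closed F' -> F' \subset F -> forest F -> forest F'.
Proof.
move=> rcF' sF'F /forestP fF; rewrite /forest rcF'; apply/forallP => d.
apply/implyP => dF'; apply: contra (fF d (subsetP sF'F _ dF')).
by apply: connect_adjS; apply: setSD.
Qed.

(* A shortest path from x to y leaves x along an edge it never uses again. *)
Lemma connect_first_edge F x y : connect (adj F) x y -> x != y ->
  exists2 d, d \in F &
    org d = x /\ connect (adj (F :\: [set d; rev d])) (tgt d) y.
Proof.
move=> /connectP[p pth ->]; case/shortenP: pth => p' pth' up _ {p}.
case: p' pth' up => [|z q] /=; first by rewrite eqxx.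
case/andP => /adjP[d dF [od td]] pq /andP[xq uq] _.
exists d => //; split => //; apply/connectP; exists q; last by rewrite td.
rewrite td; apply: (@sub_in_path _ (predC1 x) (adj F)) => //.
  move=> a b; rewrite !inE => ax bx /adjP[e eF [oe te]].
  apply/adjP; exists e => //; rewrite !inE eF andbT negb_or.
  apply/andP; split; apply/eqP => ee.
    by move: ax; rewrite -oe ee od eqxx.
  by move: bx; rewrite -te ee tgt_rev od eqxx.
rewrite /=; apply/andP; split.
  by apply: contra xq => /eqP->; rewrite inE eqxx.
apply/allP => w wq; rewrite !inE; apply: contra xq => /eqP <-.
by rewrite inE wq orbT.
Qed.

Lemma in_verts F d : d \in F -> org d \in verts F.
Proof. exact: imset_f. Qed.

Lemma tgt_in_verts F d : rev_closed F -> d \in F -> tgt d \in verts F.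
Proof. by move=> /rev_closedP rcF /rcF; apply: in_verts. Qed.

End GraphBasics.

Section HubForests.
Variable G : graph.
Implicit Types (S F : {set drt G}) (M : {set vtx G}).

Definition hub_forest S M F : bool :=
  [&& F \subset S, forest F &
      [forall x in verts S, [exists m in M, connect (adj F) x m]]].

Definition joins M F : bool :=
  [exists m in M, [exists m' in M, (m != m') && connect (adj F) m m']].

(* For a 2-segment, [hub_forest_count S M true] is its number of spanning trees. *)
Definition hub_forest_count S M (b : bool) : nat :=
  #|[set F | hub_forest S M F && (joins M F == b)]|.

Lemma joinsPn M F :
  reflect {in M &, forall m m', connect (adj F) m m' -> m = m'} (~~ joins M F).
Proof.
apply: (iffP negP) => [nj m m' mM m'M cmm|H].
  apply/eqP/negPn/negP => ne; apply: nj; apply/existsP; exists m; rewrite mM.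
  by apply/existsP; exists m'; rewrite m'M ne.
case/existsP => m /andP[mM /existsP[m' /andP[m'M /andP[/eqP ne cmm]]]].
exact/ne/H.
Qed.

Lemma rooted_forestE S M F :
  rooted_forest S M F = hub_forest S M F && ~~ joins M F.
Proof.
rewrite /rooted_forest /hub_forest -!andbA; do 4 congr (_ && _).
apply/idP/joinsPn => [/forallP H m m' mM m'M|H].
  have := H m; rewrite mM => /forallP/(_ m').
  by rewrite m'M /= => /implyP H1 /H1 /eqP.
apply/forallP => m; apply/implyP => mM; apply/forallP => m'; apply/implyP => m'M.
by apply/implyP => /(H m m' mM m'M) ->.
Qed.

Lemma Fcount_hub_forests S M : Fcount S M = hub_forest_count S M false.
Proof. by apply: eq_card => F; rewrite !inE eqbF_neg rooted_forestE. Qed.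

End HubForests.

Section Multigraph.
Variables (V J : finType) (ends : J -> {set V}).
Implicit Types (C : {set J}) (R : {set V}).

Definition madj C : rel V :=
  fun x y => [exists j in C, (x \in ends j) && (y \in ends j)].

Definition macyclic C : bool :=
  [forall j in C, [forall h in ends j, [forall h' in ends j,
     (h != h') ==> ~~ connect (madj (C :\ j)) h h']]].

Definition mspanning_tree R C : bool :=
  [&& C \subset [set j | #|ends j| == 2],
      [forall x in R, [forall y in R, connect (madj C) x y]] & macyclic C].

Lemma madj_sym C : symmetric (madj C).
Proof.
move=> x y; apply/existsP/existsP => [][j /andP[jC /andP[xj yj]]];
  by exists j; rewrite jC xj yj.
Qed.

Lemma connect_madj_sym C : connect_sym (madj C).
Proof. exact/sym_connect_sym/madj_sym. Qed.

Lemma connect_madjS C C' : C \subset C' ->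
  subrel (connect (madj C)) (connect (madj C')).
Proof.
move=> sCC'; apply: connect_sub => x y /existsP[j /andP[jC xy]].
by apply: connect1; apply/existsP; exists j; rewrite (subsetP sCC' _ jC).
Qed.

Lemma connect_madj_sub C (e : rel V) :
  {in C, forall j, {in ends j &, forall u v, connect e u v}} ->
  subrel (connect (madj C)) (connect e).
Proof.
move=> H; apply: connect_sub => x y /existsP[j /andP[jC /andP[xj yj]]].
exact: (H j jC x y xj yj).
Qed.

Lemma macyclicP C :
  reflect {in C, forall j, {in ends j &, forall h h',
             h != h' -> ~~ connect (madj (C :\ j)) h h'}}
          (macyclic C).
Proof.
apply: (iffP forallP) => [H j jC h h' hj h'j ne|H j].
  have := H j; rewrite jC => /forallP/(_ h); rewrite hj => /forallP/(_ h').
  by rewrite h'j ne.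
apply/implyP => jC; apply/forallP => h; apply/implyP => hj.
by apply/forallP => h'; apply/implyP => h'j; apply/implyP; apply: H.
Qed.

End Multigraph.

Lemma in_seg_ram (G : graph) (R : {set vtx G}) (A : {set drt G}) x :
  (x \in seg_ram R A) = (x \in verts A) && (x \in R).
Proof. by rewrite inE. Qed.

(* The properties of a segment decomposition used in the count.  The index
   type is arbitrary because the segments of a layer are indexed by pairs. *)
Record segmentation (G : graph) (R : {set vtx G}) (I : finType)
    (S : I -> {set drt G}) : Prop := Segmentation {
  seg_rev_closed : forall i, rev_closed (S i);
  seg_cover : forall d, exists i, d \in S i;
  seg_disjoint : forall i j d, d \in S i -> d \in S j -> i = j;
  seg_private : forall i d, org d \notin R -> org d \in verts (S i) -> d \in S i;
  seg_ram_card : forall i, 0 < #|seg_ram R (S i)| <= 2;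
  seg_unram_cover : forall v, v \notin R -> exists i, v \in verts (S i) }.

Section SegmentTrees.
Variable G : graph.
Hypothesis revK : involutive (@rev G).
Variables (R : {set vtx G}) (I : finType) (S : I -> {set drt G}).
Hypothesis HS : segmentation R S.
Implicit Types (T U : {set drt G}) (i : I).
Local Notation hubs i := (seg_ram R (S i)).

Definition joined T : {set I} := [set i | joins (hubs i) (T :&: S i)].

Lemma seg_ram_two i a h h' : a \in hubs i -> h \in hubs i -> h' \in hubs i ->
  h != h' -> a = h \/ a = h'.
Proof.
move=> ai hi h'i ne.
case: (eqVneq a h) => [->|ah]; first by left.
case: (eqVneq a h') => [->|ah']; first by right.
have : #|[set a; h; h']| <= #|hubs i|.
  by apply/subset_leq_card/subsetP => z; rewrite !in_setU !in_set1 => /orP[/orP[]|] /eqP->.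
rewrite -setUA cardsU1 cards2 !inE negb_or ah ah' ne /=.
by case/andP: (seg_ram_card HS i) => _ /(leq_trans _) H /H.
Qed.

Lemma joins_connect i U : rev_closed U -> joins (hubs i) U ->
  {in hubs i &, forall a b, connect (adj U) a b}.
Proof.
move=> rcU /existsP[h /andP[hi /existsP[h' /andP[h'i /andP[ne c]]]]] a b ai bi.
have sym := connect_adj_sym revK rcU.
case: (seg_ram_two ai hi h'i ne) => ->; case: (seg_ram_two bi hi h'i ne) => ->;
  by rewrite ?connect0 ?c // sym.
Qed.

Lemma joins_card i U : joins (hubs i) U -> #|hubs i| == 2.
Proof.
move=> /existsP[h /andP[hi /existsP[h' /andP[h'i /andP[ne _]]]]].
rewrite eqn_leq; case/andP: (seg_ram_card HS i) => _ -> /=.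
have <- : #|[set h; h']| = 2 by rewrite cards2 ne.
by apply/subset_leq_card/subsetP => z /set2P[]->.
Qed.

(* A path from a vertex of [S i] stays in [S i] until it meets a ramified vertex. *)
Lemma connect_trace_or_hub T i x y : x \in verts (S i) -> connect (adj T) x y ->
  connect (adj (T :&: S i)) x y \/
  exists2 h, h \in hubs i & connect (adj (T :&: S i)) x h.
Proof.
move=> xS /connectP[p pth ->]; elim: p x xS pth => [|z p IH] x xS /=.
  by left.
case: (boolP (x \in R)) => [xR _|xR /andP[/adjP[d dT [od td]] pth]].
  by right; exists x; rewrite ?in_seg_ram ?xS ?xR.
have dS : d \in S i by apply: (seg_private HS); rewrite od.
have a1 : adj (T :&: S i) x z by apply/adjP; exists d; rewrite ?inE ?dT.
have zS : z \in verts (S i) by rewrite -td tgt_in_verts ?(seg_rev_closed HS).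
case: (IH z zS pth) => [c|[h hh c]].
  by left; apply: connect_trans (connect1 a1) c.
by right; exists h => //; apply: connect_trans (connect1 a1) c.
Qed.

(* Invariant: [x] is the last ramified vertex [h] met by the walk, or is reached
   from [h] inside one segment without meeting another ramified vertex. *)
Lemma connect_ram_joined_path T h x p :
  h \in R -> (x = h \/ exists2 i, h \in hubs i & x \in verts (S i) /\
                connect (adj (T :&: S i)) h x /\ x \notin R) ->
  path (adj T) x p -> last x p \in R ->
  connect (madj (fun i => hubs i) (joined T)) h (last x p).
Proof.
elim: p x h => [|z p IH] x h hR inv /=.
  by move=> _ xR; case: inv => [->|[i _ [_ [_ /negP//]]]]; apply: connect0.
case/andP => /adjP[d dT [od td]] pth lR.
have [j dS [hj cj]] : exists2 j, d \in S j & h \in hubs j /\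
    connect (adj (T :&: S j)) h x.
  case: inv => [xh|[i hi [xi [ci xR]]]].
    have [j dj] := seg_cover HS d; exists j => //; split; last by rewrite xh connect0.
    by rewrite in_seg_ram -xh -od in_verts //= od xh.
  by exists i; first by apply: (seg_private HS); rewrite od.
have a1 : adj (T :&: S j) x z by apply/adjP; exists d; rewrite ?inE ?dT.
have cz : connect (adj (T :&: S j)) h z := connect_trans cj (connect1 a1).
have zS : z \in verts (S j) by rewrite -td tgt_in_verts ?(seg_rev_closed HS).
case: (boolP (z \in R)) => zR; last by apply: IH pth lR => //; right; exists j.
apply: connect_trans (IH z z zR (or_introl erefl) pth lR).
case: (eqVneq h z) => [<-|hz]; first exact: connect0.
apply: connect1; apply/existsP; exists j; rewrite hj in_seg_ram zS zR inE.
rewrite !andbT; apply/existsP; exists h; rewrite hj; apply/existsP; exists z.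
by rewrite in_seg_ram zS zR hz.
Qed.

Lemma connect_ram_joined T h y : h \in R -> y \in R -> connect (adj T) h y ->
  connect (madj (fun i => hubs i) (joined T)) h y.
Proof.
move=> hR yR /connectP[p pth yE]; rewrite yE.
by apply: connect_ram_joined_path => //; [left | rewrite -yE].
Qed.

Lemma trace_hub_forest T i : spanning_tree T -> hub_forest (S i) (hubs i) (T :&: S i).
Proof.
case/andP => fT /forallP cT; have rcT : rev_closed T := (andP fT).1.
have rcTi := rev_closedI rcT (seg_rev_closed HS i).
rewrite /hub_forest subsetIr (forestS rcTi _ fT) ?subsetIl //=.
apply/forallP => x; apply/implyP => xS; apply/existsP.
have [h0 h0i] : exists h0, h0 \in hubs i.
  by apply/set0Pn; rewrite -card_gt0; case/andP: (seg_ram_card HS i).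
have [c|[h hi c]] := connect_trace_or_hub xS (forallP (cT x) h0).
  by exists h0; rewrite h0i.
by exists h; rewrite hi.
Qed.

(* An edge of [T :&: S i] on the path between the hubs of [i], closed up by a
   path between them outside [S i], would lie on a cycle of [T]. *)
Lemma joined_macyclic T : forest T -> macyclic (fun i => hubs i) (joined T).
Proof.
move=> fT; have rcT : rev_closed T := (andP fT).1.
apply/macyclicP => i; rewrite inE => ji h h' hi h'i ne; apply/negP => cM.
have rcTi := rev_closedI rcT (seg_rev_closed HS i).
have [d /setIP[dT dS] [od c2]] := connect_first_edge revK (joins_connect rcTi ji hi h'i) ne.
have cout : connect (adj (T :\: S i)) h h'.
  apply: connect_madj_sub cM => j; rewrite !inE => /andP[nji jj] u v uj vj.
  have := joins_connect (rev_closedI rcT (seg_rev_closed HS j)) jj uj vj.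
  apply: connect_adjS; apply/subsetP => e; rewrite !inE => /andP[eT eS].
  by rewrite eT andbT; apply: contra nji => eSi; rewrite (seg_disjoint HS eSi eS).
have sym := connect_adj_sym revK (rev_closedD2 revK d rcT).
have := forestP fT dT; apply/negP/negPn; rewrite sym.
apply: connect_trans (connect_adjS _ c2) _; first by apply: setSD; apply: subsetIl.
rewrite od sym; apply: connect_adjS cout; apply/subsetP => e; rewrite !inE.
case/andP => eS ->; rewrite andbT negb_or; apply/andP; split; apply: contra eS => /eqP->//.
exact: (rev_closedP _ (seg_rev_closed HS i)).
Qed.

Lemma joined_mspanning_tree T : spanning_tree T ->
  mspanning_tree (fun i => hubs i) R (joined T).
Proof.
move=> /andP[fT /forallP cT]; rewrite /mspanning_tree joined_macyclic // andbT.
apply/andP; split; first by apply/subsetP => i; rewrite !inE; apply: joins_card.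
apply/forallP => x; apply/implyP => xR; apply/forallP => y; apply/implyP => yR.
exact: connect_ram_joined (forallP (cT x) y).
Qed.

Lemma traces_rev_closed T : (forall i, forest (T :&: S i)) -> rev_closed T.
Proof.
move=> fTi; apply/rev_closedP => d dT; have [i di] := seg_cover HS d.
have /andP[/rev_closedP rci _] := fTi i.
by have /rci /setIP[] : d \in T :&: S i by rewrite inE dT di.
Qed.

Lemma traces_connected T :
  (forall i, hub_forest (S i) (hubs i) (T :&: S i)) -> rev_closed T ->
  [forall x in R, [forall y in R, connect (madj (fun i => hubs i) (joined T)) x y]] ->
  connectedb T.
Proof.
move=> tr rcT /forallP cM.
have to_hub x : exists2 h, h \in R & connect (adj T) x h.
  case: (boolP (x \in R)) => xR; first by exists x.
  have [i xi] := seg_unram_cover HS xR.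
  have /and3P[_ _ /forallP/(_ x)] := tr i; rewrite xi => /existsP[h /andP[hi c]].
  exists h; first by move: hi; rewrite in_seg_ram => /andP[].
  by apply: connect_adjS c; apply: subsetIl.
have cR a b : a \in R -> b \in R -> connect (adj T) a b.
  move=> aR bR; have := cM a; rewrite aR => /forallP/(_ b); rewrite bR.
  apply: connect_madj_sub => j; rewrite inE => jj u v uj vj.
  apply: (connect_adjS (subsetIl T (S j))).
  exact: (joins_connect (rev_closedI rcT (seg_rev_closed HS j)) jj uj vj).
apply/forallP => x; apply/forallP => y.
have [hx hxR cx] := to_hub x; have [hy hyR cy] := to_hub y.
apply: connect_trans cx (connect_trans (cR _ _ hxR hyR) _).
by rewrite connect_adj_sym.
Qed.

Lemma joined_setD2 T d i : d \in S i ->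
  ~~ joins (hubs i) ((T :\: [set d; rev d]) :&: S i) ->
  joined (T :\: [set d; rev d]) \subset joined T :\ i.
Proof.
move=> di nj; apply/subsetP => j; rewrite !inE => jj.
have nji : j != i by apply: contraNneq nj => <-.
rewrite nji /=.
suff -> : T :&: S j = (T :\: [set d; rev d]) :&: S j by [].
apply/setP => e; rewrite !inE; case: (boolP (e \in S j)) => eSj; rewrite ?andbF ?andbT //.
have neS : e \notin S i by apply: contra nji => eSi; rewrite (seg_disjoint HS eSj eSi).
have rdi : rev d \in S i := rev_closedP _ (seg_rev_closed HS i) _ di.
have ned : e != d by apply: contraNneq neS => ->.
have nerd : e != rev d by apply: contraNneq neS => ->.
by rewrite (negbTE ned) (negbTE nerd).
Qed.

Lemma leave_segment_hubs U d i : rev_closed U -> d \in S i ->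
  connect (adj U) (org d) (tgt d) -> ~~ connect (adj (U :&: S i)) (org d) (tgt d) ->
  exists h h', [/\ h \in hubs i, h' \in hubs i, h != h',
    connect (adj (U :&: S i)) h (org d) & connect (adj (U :&: S i)) (tgt d) h'].
Proof.
move=> rcU di cU ncUi.
have symUi := connect_adj_sym revK (rev_closedI rcU (seg_rev_closed HS i)).
have to_hub z w : z \in verts (S i) -> connect (adj U) z w ->
    ~~ connect (adj (U :&: S i)) z w ->
    exists2 h, h \in hubs i & connect (adj (U :&: S i)) h z.
  by move=> zS /(connect_trace_or_hub zS) [->|[h hi]]; last by exists h; rewrite // symUi.
have [h hi ch] := to_hub _ _ (in_verts di) cU ncUi.
have [h' h'i ch'] : exists2 h', h' \in hubs i & connect (adj (U :&: S i)) h' (tgt d).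
  apply: (to_hub _ (org d)); first exact: tgt_in_verts (seg_rev_closed HS i) di.
    by rewrite connect_adj_sym.
  by rewrite symUi.
exists h, h'; split => //; last by rewrite symUi.
by apply: contraNneq ncUi => eh; rewrite -eh in ch'; rewrite (connect_trans _ ch') // symUi.
Qed.

Lemma traces_forest T : (forall i, hub_forest (S i) (hubs i) (T :&: S i)) ->
  macyclic (fun i => hubs i) (joined T) -> forest T.
Proof.
move=> tr /macyclicP ac.
have rcT : rev_closed T by apply: traces_rev_closed => i; case/and3P: (tr i).
rewrite /forest rcT; apply/forallP => d; apply/implyP => dT; apply/negP => cT'.
have [i di] := seg_cover HS d.
set T' := T :\: [set d; rev d].
have rcT' := rev_closedD2 revK d rcT.
have symT'i := connect_adj_sym revK (rev_closedI rcT' (seg_rev_closed HS i)).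
have ncT'i : ~~ connect (adj (T' :&: S i)) (org d) (tgt d).
  case/and3P: (tr i) => _ /forestP fTi _; rewrite /T' setIDAC.
  by apply: fTi; rewrite inE dT di.
have [h [h' [hi h'i ne ch ch']]] := leave_segment_hubs rcT' di cT' ncT'i.
have nj : ~~ joins (hubs i) (T' :&: S i).
  apply: contra ncT'i => /(joins_connect (rev_closedI rcT' (seg_rev_closed HS i))) ji.
  by rewrite symT'i (connect_trans ch' (connect_trans (ji h' h h'i hi) ch)).
have ji : i \in joined T.
  rewrite inE; apply/existsP; exists h; rewrite hi; apply/existsP; exists h'; rewrite h'i ne.
  have sub : T' :&: S i \subset T :&: S i by apply/setSI/subsetDl.
  apply: connect_trans (connect_adjS sub ch) (connect_trans (connect1 _) (connect_adjS sub ch')).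
  by apply/adjP; exists d; rewrite ?inE ?dT.
have [hR h'R] : h \in R /\ h' \in R by move: hi h'i; rewrite !in_seg_ram => /andP[_ ->] /andP[].
have sub' : T' :&: S i \subset T' := subsetIl _ _.
have cM : connect (adj T') h h'.
  exact: connect_trans (connect_adjS sub' ch) (connect_trans cT' (connect_adjS sub' ch')).
case/negP: (ac i ji h h' hi h'i ne).
exact: (connect_madjS (joined_setD2 di nj)) (connect_ram_joined hR h'R cM).
Qed.

Theorem spanning_treeE T :
  spanning_tree T = [forall i, hub_forest (S i) (hubs i) (T :&: S i)] &&
                    mspanning_tree (fun i => hubs i) R (joined T).
Proof.
apply/idP/andP => [sT|[/forallP tr /and3P[_ cM ac]]].
  by split; [apply/forallP => i; apply: trace_hub_forest | apply: joined_mspanning_tree].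
rewrite /spanning_tree traces_forest // traces_connected //.
by apply: traces_rev_closed => i; case/and3P: (tr i).
Qed.

End SegmentTrees.

Lemma prod_nat_bool (I : finType) (b : I -> bool) :
  \prod_i (b i : nat) = [forall i, b i] :> nat.
Proof.
case: (boolP [forall i, b i]) => [/forallP H|/forallPn[i /negbTE bi]].
  by rewrite big1 // => i _; rewrite H.
by rewrite (bigD1 i) //= bi.
Qed.

Lemma prod_nat_cond (I : finType) (P : pred I) (a : I -> nat) :
  \prod_i (if P i then a i else 0) = if [forall i, P i] then \prod_i a i else 0.
Proof.
case: (boolP [forall i, P i]) => [/forallP H|/forallPn[i /negbTE Pi]].
  by apply: eq_bigr => i _; rewrite H.
by rewrite (bigD1 i) //= Pi.
Qed.

Lemma card_set_sum (T : finType) (P : pred T) :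
  #|[set x | P x]| = \sum_x (P x : nat).
Proof. by rewrite -sum1_card big_mkcond; apply: eq_bigr => x _; rewrite inE; case: (P x). Qed.

(* A set is determined by its traces on the blocks of a partition. *)
Lemma sum_prod_traces (D I : finType) (S : I -> {set D}) :
  (forall d, exists i, d \in S i) -> (forall i j d, d \in S i -> d \in S j -> i = j) ->
  forall f : I -> {set D} -> nat,
  \sum_(T : {set D}) \prod_i f i (T :&: S i) =
  \prod_i \sum_(U : {set D} | U \subset S i) f i U.
Proof.
move=> Scover Sdisj f.
under eq_bigr => i _ do rewrite big_mkcond /=.
rewrite bigA_distr_bigA /=.
rewrite [RHS](eq_bigr (fun g : {ffun I -> {set D}} =>
                 if [forall i, g i \subset S i] then \prod_i f i (g i) else 0));
  last by move=> g _; rewrite prod_nat_cond.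
rewrite -big_mkcond /=.
pose traces (T : {set D}) : {ffun I -> {set D}} := [ffun i => T :&: S i].
rewrite (reindex_onto traces (fun g => \bigcup_i g i)) /=; last first.
  move=> g /forallP sub; apply/ffunP => i; rewrite ffunE; apply/setP => d.
  rewrite inE; apply/andP/idP => [[/bigcupP[j _ dj] di]|di].
    by rewrite -(Sdisj _ _ _ (subsetP (sub j) _ dj) di).
  by split; [apply/bigcupP; exists i | apply: (subsetP (sub i))].
apply: eq_big => [T|T _]; last by apply: eq_bigr => i _; rewrite ffunE.
have -> : \bigcup_i traces T i = T.
  apply/setP => d; apply/bigcupP/idP => [[i _]|dT]; first by rewrite ffunE inE => /andP[].
  by have [i di] := Scover d; exists i => //; rewrite ffunE inE dT di.
by rewrite eqxx andbT; apply/esym/forallP => i; rewrite ffunE subsetIr.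
Qed.

Section SpanningTreeCount.
Variable G : graph.
Hypothesis revK : involutive (@rev G).
Variables (R : {set vtx G}) (I : finType) (S : I -> {set drt G}).
Hypothesis HS : segmentation R S.
Local Notation hubs i := (seg_ram R (S i)).

Theorem kappa_segmentation :
  kappa G = \sum_(C : {set I}) mspanning_tree (fun i => hubs i) R C *
              \prod_i hub_forest_count (S i) (hubs i) (i \in C).
Proof.
pose good (C : {set I}) (T : {set drt G}) i :=
  hub_forest (S i) (hubs i) (T :&: S i) && (joins (hubs i) (T :&: S i) == (i \in C)).
transitivity (\sum_(T : {set drt G}) \sum_(C : {set I})
                mspanning_tree (fun i => hubs i) R C * \prod_i (good C T i : nat)).
  rewrite /kappa card_set_sum; apply: eq_bigr => T _.
  rewrite (spanning_treeE revK HS) (bigD1 (joined R S T)) //=.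
  rewrite [X in _ + X]big1 ?addn0 => [|C neC].
    rewrite prod_nat_bool.
    have -> : [forall i, good (joined R S T) T i] =
              [forall i, hub_forest (S i) (hubs i) (T :&: S i)].
      by apply: eq_forallb => i; rewrite /good inE eqxx andbT.
    by rewrite mulnC; case: [forall i, _]; case: mspanning_tree.
  rewrite prod_nat_bool; case: (boolP [forall i, _]) => [/forallP gT|]; last by rewrite muln0.
  case/eqP: neC; apply/setP => i; rewrite inE.
  by case/andP: (gT i) => _ /eqP.
rewrite exchange_big /=; apply: eq_bigr => C _; rewrite -big_distrr /=; congr (_ * _).
rewrite (sum_prod_traces (seg_cover HS) (seg_disjoint HS)
  (fun i U => (hub_forest (S i) (hubs i) U && (joins (hubs i) U == (i \in C)) : nat))).
apply: eq_bigr => i _; rewrite /hub_forest_count card_set_sum big_mkcond /=.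
by apply: eq_bigr => U _; rewrite /hub_forest; case: (U \subset S i).
Qed.

End SpanningTreeCount.

Section MultigraphTreeCard.
Variables (V J : finType) (R : {set V}) (ends : J -> {set V}).
Hypothesis endsR : forall j, ends j \subset R.
Local Notation madj := (madj ends).
Implicit Types (C : {set J}).

Definition mclass C x : {set V} := [set y in R | connect (madj C) x y].
Definition mclasses C : {set {set V}} := [set mclass C x | x in R].

Lemma macyclicS C C' : C' \subset C -> macyclic ends C -> macyclic ends C'.
Proof.
move=> sC'C /macyclicP ac; apply/macyclicP => j jC' h h' hj h'j ne.
apply: contra (ac j (subsetP sC'C _ jC') h h' hj h'j ne).
by apply: connect_madjS; apply: setSD.
Qed.

Lemma connect_madj0 x y : connect (madj set0) x y = (x == y).
Proof.
apply/idP/eqP => [/connectP[[|z p] /=]|->]; last exact: connect0.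
  by move=> _ ->.
by case/andP => /existsP[j]; rewrite inE.
Qed.

Lemma mclass_connect C x y : connect (madj C) x y -> mclass C x = mclass C y.
Proof.
move=> cxy; apply/setP => w; rewrite !inE; congr (_ && _); apply/idP/idP => c.
  by apply: connect_trans c; rewrite connect_madj_sym.
exact: connect_trans cxy c.
Qed.

Lemma mclass_id C x : x \in R -> x \in mclass C x.
Proof. by move=> xR; rewrite inE xR connect0. Qed.

Section RemoveEdge.
Variables (C : {set J}) (j : J) (u v : V).
Hypotheses (jC : j \in C) (ej : ends j = [set u; v]).
Local Notation c' := (connect (madj (C :\ j))).
Hypothesis nuv : ~~ c' u v.

Lemma connect_madj_setD1 x y : connect (madj C) x y =
  [|| c' x y, c' x u && c' v y | c' x v && c' u y].
Proof.
have cuv : connect (madj C) u v.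
  by apply: connect1; apply/existsP; exists j; rewrite jC ej !inE !eqxx orbT.
have sub : C :\ j \subset C by apply: subsetDl.
have symC := connect_madj_sym ends C.
apply/idP/idP; last first.
  case/or3P => [c|/andP[c1 c2]|/andP[c1 c2]]; first exact: connect_madjS c.
    exact: connect_trans (connect_madjS sub c1) (connect_trans cuv (connect_madjS sub c2)).
  apply: connect_trans (connect_madjS sub c1) _.
  by apply: connect_trans _ (connect_madjS sub c2); rewrite symC.
move=> /connectP[p pth ->] {y}; elim: p x pth => [|z p IH] x /=.
  by rewrite connect0.
have split_adj : madj C x z -> madj (C :\ j) x z \/ (x \in [set u; v] /\ z \in [set u; v]).
  case/existsP => i /andP[iC xz]; case: (eqVneq i j) => [eij|nij].
    by right; rewrite -ej -eij; case/andP: xz.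
  by left; apply/existsP; exists i; rewrite !inE nij iC.
case/andP => /split_adj [a|[xuv zuv]] /IH.
  have cxz : c' x z := connect1 a.
  case/or3P => [c|/andP[c1 c2]|/andP[c1 c2]].
  - by rewrite (connect_trans cxz c).
  - by rewrite (connect_trans cxz c1) c2 orbT.
  - by rewrite (connect_trans cxz c1) c2 !orbT.
have end_uv a : a \in [set u; v] -> [|| c' a (last z p), c' a u && c' v (last z p)
    | c' a v && c' u (last z p)] = c' u (last z p) || c' v (last z p).
  by case/set2P => ->; rewrite connect0 /=; case: (c' u _); case: (c' v _);
    rewrite ?andbF ?orbF ?orbT.
by rewrite (end_uv z zuv) (end_uv x xuv).
Qed.

Local Notation cl' := (mclass (C :\ j)).
Local Notation U := (cl' u :|: cl' v).

Lemma mclass_setD1 x : x \in R -> mclass C x = if x \in U then U else cl' x.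
Proof.
move=> xR; have sym' := connect_madj_sym ends (C :\ j).
have nvu : ~~ c' v u by rewrite sym'.
case: ifPn => [|xU]; last first.
  apply/setP => y; rewrite !inE connect_madj_setD1.
  move: xU; rewrite !inE xR /= negb_or => /andP[nu nv].
  by rewrite (sym' x u) (negbTE nu) (sym' x v) (negbTE nv) !orbF.
rewrite !inE xR /= => /orP[] c; apply/setP => y;
  rewrite !inE connect_madj_setD1 -!(same_connect sym' c) connect0 ?(negbTE nuv) ?(negbTE nvu) /=;
  by case: (y \in R); case: (c' u y); case: (c' v y).
Qed.

Lemma card_mclasses_setD1 : #|mclasses C| + 1 = #|mclasses (C :\ j)|.
Proof.
have [uR vR] : u \in R /\ v \in R.
  by split; apply: (subsetP (endsR j)); rewrite ej !inE eqxx ?orbT.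
have sym' := connect_madj_sym ends (C :\ j).
pose B := [set cl' x | x in R :\: U].
have notB (W : {set V}) : (u \in W) || (v \in W) -> W \notin B.
  move=> uvW; apply/imsetP => -[x /setDP[xR xU] eW].
  move: uvW xU; rewrite eW !inE xR uR vR /= => /orP[] c; by rewrite !(sym' _ x) c ?orbT.
have class_in_U x : x \in R -> x \in U -> cl' x = cl' u \/ cl' x = cl' v.
  by move=> xR; rewrite !inE => /orP[] /andP[_ c]; [left|right];
    apply/esym/mclass_connect.
have E1 : mclasses C = U |: B.
  apply/setP => W; rewrite !inE; apply/imsetP/orP.
    case=> x xR ->; rewrite mclass_setD1 //; case: ifP => xU; first by left.
    by right; apply/imsetP; exists x; rewrite // inE xU xR.
  case=> [/eqP->|/imsetP[x /setDP[xR xU] ->]].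
    by exists u; rewrite ?mclass_setD1 ?uR // inE mclass_id ?uR.
  by exists x; rewrite ?mclass_setD1 // (negbTE xU).
have E2 : mclasses (C :\ j) = cl' u |: (cl' v |: B).
  apply/setP => W; rewrite !inE; apply/imsetP/idP.
    case=> x xR ->; case: (boolP (x \in U)) => xU.
      by case: (class_in_U x xR xU) => ->; rewrite eqxx ?orbT.
    by rewrite imset_f ?orbT // inE xU xR.
  by case/orP => [/eqP->|/orP[/eqP->|/imsetP[x /setDP[xR _] ->]]];
    [exists u; rewrite ?uR | exists v; rewrite ?vR | exists x].
have ne : cl' u != cl' v.
  apply: contra nuv => /eqP e; have : v \in cl' u by rewrite e mclass_id ?vR.
  by rewrite inE => /andP[].
have nU : U \notin B by apply: notB; rewrite in_setU mclass_id ?uR.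
have nu : cl' u \notin B by apply: notB; rewrite mclass_id ?uR.
have nv : cl' v \notin B by apply: notB; rewrite mclass_id ?vR ?orbT.
by rewrite E1 E2 !cardsU1 nU nv in_setU1 negb_or ne nu addnC.
Qed.

End RemoveEdge.

Lemma card_mclasses_macyclic C : C \subset [set j | #|ends j| == 2] ->
  macyclic ends C -> #|mclasses C| + #|C| = #|R|.
Proof.
move cC : #|C| => n; elim: n C cC => [|n IH] C cC sub ac.
  have -> : mclasses C = [set [set x] | x in R].
    rewrite (cards0_eq cC); apply: eq_in_imset => x xR; apply/setP => y.
    by rewrite !inE connect_madj0 eq_sym; case: (eqVneq y x) => [->|]; rewrite ?xR ?andbF.
  by rewrite addn0 card_in_imset // => x y _ _; apply: set1_inj.
have [j jC] : exists j, j \in C by apply/set0Pn; rewrite -card_gt0 cC.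
have /cards2P[u [v [uv ej]]] : #|ends j| == 2 by move/subsetP/(_ j jC): sub; rewrite inE.
have nuv : ~~ connect (madj (C :\ j)) u v.
  by move/macyclicP: ac => /(_ j jC u v); rewrite ej !inE !eqxx orbT; apply.
have cC' : #|C :\ j| = n by move: cC; rewrite (cardsD1 j C) jC add1n => -[].
rewrite -(IH (C :\ j) cC' (subset_trans (subsetDl _ _) sub) (macyclicS (subsetDl _ _) ac)).
by rewrite -(card_mclasses_setD1 jC ej nuv) -addnA add1n.
Qed.

Lemma mspanning_tree_card C : mspanning_tree ends R C -> #|C| = #|R| - 1.
Proof.
case/and3P => sub /forallP conn ac; have := card_mclasses_macyclic sub ac.
have [R0|[x0 x0R]] := set_0Vmem R.
  suff -> : C = set0 by rewrite cards0 R0 cards0.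
  apply/setP => j; rewrite inE; apply/negP => /(subsetP sub); rewrite inE.
  by have := endsR j; rewrite R0 subset0 => /eqP->; rewrite cards0.
suff -> : mclasses C = [set R] by rewrite cards1 => <-; rewrite add1n subn1.
have classR x : x \in R -> mclass C x = R.
  move=> xR; apply/setP => y; rewrite inE; case: (boolP (y \in R)) => //= yR.
  by have := conn x; rewrite xR /= => /forallP/(_ y); rewrite yR.
apply/setP => W; rewrite inE; apply/imsetP/eqP => [[x xR ->]|->]; first exact: classR.
by exists x0; rewrite ?classR.
Qed.

End MultigraphTreeCard.

Lemma forall_imset (A B : finType) (f : A -> B) (D : {set A}) (P : pred B) :
  [forall x in f @: D, P x] = [forall x in D, P (f x)].
Proof.
apply/forallP/forallP => H x; first by apply/implyP => xD; have := H (f x); rewrite imset_f.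
by apply/implyP => /imsetP[y yD ->]; have := H y; rewrite yD.
Qed.

Lemma exists_imset (A B : finType) (f : A -> B) (D : {set A}) (P : pred B) :
  [exists x in f @: D, P x] = [exists x in D, P (f x)].
Proof.
apply/existsP/existsP => [[x /andP[/imsetP[y yD ->] Py]]|[x /andP[xD Px]]].
  by exists y; rewrite yD.
by exists (f x); rewrite imset_f.
Qed.

Lemma connect_inj (A B : finType) (f : A -> B) (e : rel A) (e' : rel B) :
  injective f -> (forall x y', e' (f x) y' -> exists y, y' = f y) ->
  (forall x y, e' (f x) (f y) = e x y) ->
  forall x y, connect e' (f x) (f y) = connect e x y.
Proof.
move=> f_inj f_onto fe x y; apply/idP/idP => /connectP[p pth yE]; last first.
  rewrite yE; elim: p x pth {yE} => [|z p IH] x /=; first by rewrite connect0.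
  by case/andP => exz /IH; apply: connect_trans; apply: connect1; rewrite fe.
elim: p x pth yE => [|z p IH] x /=; first by move=> _ /f_inj ->.
case/andP => /[dup] /f_onto[z' ->] exz pth /(IH z' pth); apply: connect_trans.
by apply: connect1; rewrite -fe.
Qed.

Section MultigraphImage.
Variables (V V' J : finType) (phi : V -> V') (ends : J -> {set V}) (ends' : J -> {set V'}).
Hypotheses (phi_inj : injective phi) (ends'E : forall j, ends' j = phi @: ends j).

Lemma connect_madj_inj C x y :
  connect (madj ends' C) (phi x) (phi y) = connect (madj ends C) x y.
Proof.
apply: connect_inj => // [a y' /existsP[j /andP[_ /andP[_]]]|a b].
  by rewrite ends'E => /imsetP[z _ ->]; exists z.
by apply: eq_existsb => j; rewrite !ends'E !mem_imset.
Qed.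

Lemma mspanning_tree_inj (R : {set V}) C :
  mspanning_tree ends' (phi @: R) C = mspanning_tree ends R C.
Proof.
rewrite /mspanning_tree /macyclic; congr [&& _, _ & _].
- by apply: eq_subset_r => j; rewrite !inE ends'E card_imset.
- rewrite forall_imset; apply: eq_forallb => x; congr (_ ==> _).
  by rewrite forall_imset; apply: eq_forallb => y; rewrite connect_madj_inj.
apply: eq_forallb => j; congr (_ ==> _); rewrite ends'E forall_imset.
apply: eq_forallb => h; congr (_ ==> _); rewrite forall_imset.
by apply: eq_forallb => h'; rewrite (inj_eq phi_inj) connect_madj_inj.
Qed.

End MultigraphImage.

Section MultigraphBlowup.
Variables (V J K : finType) (ends : J -> {set V}).
Local Notation ends2 := (fun jg : J * K => ends jg.1).
Implicit Types (f : {ffun J -> {set K}}).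

(* [f j] is the set of labels of the parallel copies [(j, g)] of the edge [j]. *)
Definition copies f : {set J * K} := [set jg | jg.2 \in f jg.1].
Definition copied f : {set J} := [set j | f j != set0].

Lemma copies_bij : bijective copies.
Proof.
exists (fun C : {set J * K} => [ffun j => [set g | (j, g) \in C]]) => [f|C].
  by apply/ffunP => j; apply/setP => g; rewrite ffunE !inE.
by apply/setP => -[j g]; rewrite !inE ffunE inE.
Qed.

Lemma madj_blowup (C : {set J * K}) x y :
  madj ends2 C x y = madj ends [set jg.1 | jg in C] x y.
Proof.
apply/existsP/existsP => [[jg /andP[jgC xy]]|[j /andP[/imsetP[jg jgC ->] xy]]].
  by exists jg.1; rewrite imset_f.
by exists jg; rewrite jgC.
Qed.

Lemma fst_copies f : [set jg.1 | jg in copies f] = copied f.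
Proof.
apply/setP => j; rewrite inE; apply/imsetP/set0Pn => [[[j' g]]|[g gj]].
  by rewrite inE /= => gj ->; exists g.
by exists (j, g); rewrite ?inE.
Qed.

Lemma fst_copies_setD1 f j g : #|f j| <= 1 -> g \in f j ->
  [set jg.1 | jg in copies f :\ (j, g)] = copied f :\ j.
Proof.
move=> fj1 gj; apply/setP => i; rewrite !inE; apply/imsetP/andP.
  case=> -[i' g']; rewrite !inE /= xpair_eqE => /andP[ne g'i' ->].
  split; last by apply/set0Pn; exists g'.
  by apply: contraNneq ne => ei; rewrite ei (card_le1_eqP fj1 g' g) ?eqxx // -ei.
case=> nij /set0Pn[g' g'i]; exists (i, g') => //.
by rewrite !inE xpair_eqE (negbTE nij).
Qed.

Lemma connect_madj_blowup (C : {set J * K}) :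
  connect (madj ends2 C) =2 connect (madj ends [set jg.1 | jg in C]).
Proof. by move=> x y; apply: eq_connect => a b; apply: madj_blowup. Qed.

Lemma macyclic_blowup f : copied f \subset [set j | #|ends j| == 2] ->
  macyclic ends2 (copies f) = [forall j, #|f j| <= 1] && macyclic ends (copied f).
Proof.
move=> sub2; apply/idP/andP => [/macyclicP ac|[/forallP fj1 /macyclicP ac]].
  have fj1 j : #|f j| <= 1.
    apply/card_le1_eqP => g g' gj g'j; apply/eqP/negPn/negP => ne.
    have /cards2P[u [v [uv ej]]] : #|ends j| == 2.
      by move/subsetP/(_ j): sub2; rewrite !inE; apply; apply/set0Pn; exists g.
    have := ac (j, g); rewrite inE => /(_ gj u v); rewrite /= ej !inE !eqxx orbT.
    move=> /(_ isT isT uv) /negP; apply; apply: connect1; apply/existsP; exists (j, g').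
    by rewrite !inE /= xpair_eqE eqxx ne g'j ej !inE !eqxx orbT.
  split; first exact/forallP.
  apply/macyclicP => j; rewrite inE => /set0Pn[g gj] h h' hj h'j ne.
  have := ac (j, g); rewrite inE => /(_ gj h h' hj h'j ne).
  by rewrite connect_madj_blowup fst_copies_setD1.
apply/macyclicP => -[j g]; rewrite inE /= => gj h h' hj h'j ne.
rewrite connect_madj_blowup fst_copies_setD1 //; apply: ac => //.
by rewrite inE; apply/set0Pn; exists g.
Qed.

Lemma mspanning_tree_blowup (R : {set V}) f :
  mspanning_tree ends2 R (copies f) =
  [forall j, #|f j| <= 1] && mspanning_tree ends R (copied f).
Proof.
have two_ends : (copies f \subset [set jg | #|ends2 jg| == 2]) =
                (copied f \subset [set j | #|ends j| == 2]).
  by rewrite -fst_copies; apply/subsetP/subsetP => sub j;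
    [case/imsetP => jg /sub; rewrite !inE => ? -> | move=> /(imset_f fst) /sub; rewrite !inE].
rewrite /mspanning_tree two_ends.
case: (boolP (copied f \subset _)) => //= [sub2|]; last by rewrite andbF.
rewrite macyclic_blowup // andbCA; congr (_ && _).
apply: andb_id2r => _; apply: eq_forallb => x; congr (_ ==> _); apply: eq_forallb => y.
by rewrite connect_madj_blowup fst_copies.
Qed.

Lemma sum_copy_weights (w : bool -> nat) (b : bool) :
  \sum_(A : {set K}) ((#|A| <= 1) && ((A != set0) == b) : nat) * \prod_g w (g \in A) =
  if b then #|K| * (w true * w false ^ #|K|.-1) else w false ^ #|K|.
Proof.
case: b.
  rewrite (eq_bigr (fun A => if A \in [set [set g] | g : K] then \prod_g w (g \in A) else 0));
    last first.
    move=> A _; have -> : (A \in [set [set g] | g : K]) = (#|A| == 1).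
      by apply/imsetP/cards1P => -[g]; [move=> _ -> | move=> ->]; exists g.
    by rewrite eqb_id -card_gt0 -eqn_leq; case: (#|A| == 1); rewrite ?mul1n ?mul0n.
  rewrite -big_mkcond big_imset /=; last by move=> g g' _ _; apply: set1_inj.
  rewrite -sum_nat_const; apply: eq_bigr => g _.
  rewrite (bigD1 g) //= inE eqxx (eq_bigr (fun _ => w false)) ?prod_nat_const ?cardC1 //.
  by move=> g' ng; rewrite inE (negbTE ng).
rewrite (bigD1 set0) //= cards0 eqxx mul1n [X in _ + X]big1 ?addn0 => [|A nA].
  by rewrite (eq_bigr (fun _ => w false)) ?prod_nat_const // => g _; rewrite inE.
by rewrite nA andbF.
Qed.

Lemma blowup_count (R : {set V}) (w : J -> bool -> nat) :
  \sum_(C : {set J * K}) mspanning_tree ends2 R C * \prod_(jg : J * K) w jg.1 (jg \in C) =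
  \sum_(C : {set J}) mspanning_tree ends R C *
    \prod_j (if j \in C then #|K| * (w j true * w j false ^ #|K|.-1) else w j false ^ #|K|).
Proof.
pose F (C : {set J}) j (A : {set K}) :=
  ((#|A| <= 1) && ((A != set0) == (j \in C)) : nat) * \prod_g w j (g \in A).
transitivity (\sum_(C : {set J}) \sum_(f : {ffun J -> {set K}})
                 mspanning_tree ends R C * \prod_j F C j (f j)); last first.
  apply: eq_bigr => C _; rewrite -big_distrr -bigA_distr_bigA /=; congr (_ * _).
  by apply: eq_bigr => j _; rewrite sum_copy_weights; case: (j \in C).
rewrite exchange_big (reindex copies) /=; last exact: onW_bij copies_bij.
apply: eq_bigr => f _; rewrite mspanning_tree_blowup.
rewrite (bigD1 (copied f)) //= [X in _ + X]big1 ?addn0 => [|C nC]; last first.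
  rewrite /F big_split /= prod_nat_bool.
  case: (boolP [forall j, _]) => [/forallP good|]; last by rewrite !mul0n muln0.
  by case/eqP: nC; apply/setP => j; rewrite inE; case/andP: (good j) => _ /eqP.
rewrite /F big_split /= prod_nat_bool.
rewrite (eq_bigr (fun jg => w jg.1 (jg.2 \in f jg.1))) => [|[j g] _]; last by rewrite inE.
rewrite -(pair_bigA _ (fun j g => w j (g \in f j))) /= mulnA.
have -> : [forall j, (#|f j| <= 1) && ((f j != set0) == (j \in copied f))] =
          [forall j, #|f j| <= 1].
  by apply: eq_forallb => j; rewrite inE eqxx andbT.
by case: [forall j, _]; case: mspanning_tree.
Qed.

End MultigraphBlowup.

Section TrivialLayer.
Variables (X : graph) (R : {set vtx X}) (p n : nat).
Local Notation Xn := (trivial_layer R p n).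
Local Notation ram_grp v := (if v \in R then [set: Gam p n] else [set 0%R]).

Definition lift (g : Gam p n) (v : vtx X) : vtx Xn :=
  exist _ (v, coset (ram_grp v) g) (coset_ex (fun v => ram_grp v) v g).

Definition copy (g : Gam p n) (d : drt X) : drt Xn := (d, g).

Lemma org_copy g d : org (copy g d) = lift g (org d).
Proof. by []. Qed.

Lemma rev_copy g d : rev (copy g d) = copy g (rev d).
Proof. by rewrite /= /lrev addr0. Qed.

Lemma tgt_copy g d : tgt (copy g d) = lift g (tgt d).
Proof. by rewrite /tgt rev_copy. Qed.

Lemma copy_inj g : injective (copy g).
Proof. by move=> d e [->]. Qed.

Lemma lift_inj g : injective (lift g).
Proof. by move=> v w /(congr1 val) [->]. Qed.

Lemma lift_ram g v : v \in R -> lift g v = lift 0%R v.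
Proof.
move=> vR; apply: val_inj => /=; congr (_, _).
by apply/setP => h; rewrite /coset vR !inE.
Qed.

Lemma lift_unram g g' v : v \notin R -> lift g v = lift g' v -> g = g'.
Proof.
move=> vR /(congr1 val) [] /setP /(_ g); rewrite /coset (negbTE vR) !inE.
by rewrite subrr eqxx => /esym; rewrite subr_eq0 => /eqP.
Qed.

Lemma liftP (x : vtx Xn) : exists g, x = lift g (val x).1.
Proof.
case: x => [[v c] cP]; have /existsP[g /eqP /= ec] := cP.
by exists g; apply: val_inj => /=; rewrite ec.
Qed.

Lemma trivial_layer_revK : involutive (@rev X) -> involutive (@rev Xn).
Proof. by move=> revK -[d g]; rewrite /= /lrev /= !addr0 revK. Qed.

Lemma adj_copy g (U : {set drt X}) x y :
  adj (copy g @: U) (lift g x) (lift g y) = adj U x y.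
Proof.
apply/adjP/adjP => [[_ /imsetP[d dU ->] [od td]]|[d dU [od td]]].
  by exists d => //; split; apply: (@lift_inj g); [exact: od | rewrite -tgt_copy].
by exists (copy g d); rewrite ?imset_f // tgt_copy -od -td.
Qed.

Lemma connect_copy g (U : {set drt X}) x y :
  connect (adj (copy g @: U)) (lift g x) (lift g y) = connect (adj U) x y.
Proof.
apply: connect_inj; [exact: lift_inj | | exact: adj_copy].
by move=> a y' /adjP[_ /imsetP[d dU ->] [_ <-]]; exists (tgt d); rewrite tgt_copy.
Qed.

Lemma rev_closed_copy g (U : {set drt X}) : rev_closed (copy g @: U) = rev_closed U.
Proof.
apply/rev_closedP/rev_closedP => rcU d.
  move=> dU; have := rcU _ (imset_f (copy g) dU).
  by rewrite rev_copy mem_imset //; apply: copy_inj.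
by case/imsetP => e eU ->; rewrite rev_copy imset_f // rcU.
Qed.

Lemma forest_copy g (U : {set drt X}) : forest (copy g @: U) = forest U.
Proof.
rewrite /forest rev_closed_copy; congr (_ && _); rewrite forall_imset.
apply: eq_forallb => d; congr (_ ==> ~~ _).
suff -> : copy g @: U :\: [set copy g d; rev (copy g d)] =
          copy g @: (U :\: [set d; rev d]) by rewrite tgt_copy org_copy connect_copy.
rewrite rev_copy; apply/setP => e'; apply/idP/idP.
  case/setDP => /imsetP[e eU ->]; rewrite !inE !(inj_eq (@copy_inj g)) => ne.
  by rewrite imset_f // !inE eU andbT.
case/imsetP => e; rewrite !inE => /andP[ne eU] ->.
by rewrite !(inj_eq (@copy_inj g)) ne imset_f.
Qed.

Lemma verts_copy g (U : {set drt X}) : verts (copy g @: U) = lift g @: verts U.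
Proof. by rewrite /verts -!imset_comp. Qed.

Lemma joins_copy g (M : {set vtx X}) (U : {set drt X}) :
  joins (lift g @: M) (copy g @: U) = joins M U.
Proof.
rewrite /joins exists_imset; apply: eq_existsb => h; congr (_ && _).
rewrite exists_imset; apply: eq_existsb => h'.
by rewrite (inj_eq (@lift_inj g)) connect_copy.
Qed.

Lemma hub_forest_copy g (S U : {set drt X}) (M : {set vtx X}) :
  hub_forest (copy g @: S) (lift g @: M) (copy g @: U) = hub_forest S M U.
Proof.
rewrite /hub_forest forest_copy verts_copy forall_imset; congr [&& _, _ & _].
  apply/idP/idP => [/subsetP sUS|]; last exact: imsetS.
  by apply/subsetP => d /(imset_f (copy g)) /sUS; rewrite mem_imset //; apply: copy_inj.
apply: eq_forallb => x; congr (_ ==> _); rewrite exists_imset.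
by apply: eq_existsb => m; rewrite connect_copy.
Qed.

Lemma hub_forest_count_copy g (S : {set drt X}) (M : {set vtx X}) b :
  hub_forest_count (copy g @: S) (lift g @: M) b = hub_forest_count S M b.
Proof.
rewrite /hub_forest_count -(card_imset _ (imset_inj (@copy_inj g))).
apply: eq_card => U'; rewrite inE; apply/idP/imsetP => [|[U]]; last first.
  by rewrite inE => goodU ->; rewrite hub_forest_copy joins_copy.
case/andP => /[dup] /and3P[/subsetP sU'S _ _] fU' jU'.
have U'E : U' = copy g @: (copy g @^-1: U').
  apply/setP => e; apply/idP/imsetP => [eU'|[d]]; last by rewrite inE => dU' ->.
  by have /imsetP[d _ ed] := sU'S e eU'; exists d; rewrite // inE -ed.
by exists (copy g @^-1: U'); rewrite // inE -(hub_forest_copy g) -(joins_copy g) -U'E fU'.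
Qed.

End TrivialLayer.

Section LayerSegments.
Variables (X : graph) (R : {set vtx X}) (p n : nat).
Variables (I : finType) (S : I -> {set drt X}).
Hypothesis HS : segmentation R S.
Local Notation Xn := (trivial_layer R p n).

Definition layer_seg (ig : I * Gam p n) : {set drt Xn} := copy R ig.2 @: S ig.1.
Definition layer_ram : {set vtx Xn} := [set x | (val x).1 \in R].

Lemma lift_layer_ram g v : (lift R g v \in layer_ram) = (v \in R).
Proof. by rewrite inE. Qed.

Lemma layer_ramE : layer_ram = lift R (0 : Gam p n)%R @: R.
Proof.
apply/setP => x; have [g ->] := liftP x; rewrite lift_layer_ram.
apply/idP/imsetP => [vR|[w wR /(congr1 (fun y => (val y).1)) /= ->]] //.
by exists (val x).1 => //; apply: lift_ram.
Qed.

Lemma seg_ram_layer i g :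
  seg_ram layer_ram (layer_seg (i, g)) = lift R g @: seg_ram R (S i).
Proof.
apply/setP => x; rewrite in_seg_ram verts_copy.
apply/andP/imsetP => [[/imsetP[v vi ->] vR]|[v]].
  by exists v => //; rewrite in_seg_ram vi -(lift_layer_ram g).
by rewrite in_seg_ram => /andP[vi vR] ->; rewrite imset_f // lift_layer_ram.
Qed.

Lemma seg_ram_layer0 ig :
  seg_ram layer_ram (layer_seg ig) = lift R (0 : Gam p n)%R @: seg_ram R (S ig.1).
Proof.
case: ig => i g; rewrite seg_ram_layer; apply: eq_in_imset => v.
by rewrite in_seg_ram => /andP[_ /lift_ram].
Qed.

Lemma segmentation_layer : segmentation layer_ram layer_seg.
Proof.
case: HS => rcS coverS disjS privS ramS unramS; split.
- by case=> i g; rewrite /layer_seg rev_closed_copy.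
- by case=> d g; have [i di] := coverS d; exists (i, g); apply: imset_f.
- case=> [i g] [j g'] _ /imsetP[d di ->] /imsetP[d' dj [dd' ->]] /=.
  by rewrite (disjS i j d) // dd'.
- case=> i g [d g']; rewrite org_copy lift_layer_ram verts_copy => dR /imsetP[v vi e].
  have ev : org d = v by move/(congr1 (fun y => (val y).1)): e.
  by rewrite -ev in e vi; rewrite (lift_unram dR e) imset_f // (privS i d dR vi).
- by case=> i g; rewrite seg_ram_layer card_imset //; apply: lift_inj.
move=> x; have [g ->] := liftP x; rewrite lift_layer_ram => vR.
by have [i vi] := unramS _ vR; exists (i, g); rewrite verts_copy imset_f.
Qed.

Lemma hub_forest_count_layer ig b :
  hub_forest_count (layer_seg ig) (seg_ram layer_ram (layer_seg ig)) b =
  hub_forest_count (S ig.1) (seg_ram R (S ig.1)) b.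
Proof. by case: ig => i g; rewrite seg_ram_layer hub_forest_count_copy. Qed.

End LayerSegments.

Section KappaLayer.
Variable X : graph.
Hypothesis revK : involutive (@rev X).
Variables (R : {set vtx X}) (p n : nat) (I : finType) (S : I -> {set drt X}).
Hypothesis HS : segmentation R S.
Local Notation N := #|Gam p n|.
Local Notation hubs i := (seg_ram R (S i)).
Local Notation w i b := (hub_forest_count (S i) (hubs i) b).

Lemma kappa_trivial_layer_sum :
  kappa (trivial_layer R p n) =
  \sum_(C : {set I}) mspanning_tree (fun i => hubs i) R C *
    \prod_i (if i \in C then N * (w i true * w i false ^ N.-1) else w i false ^ N).
Proof.
rewrite (kappa_segmentation (trivial_layer_revK revK) (segmentation_layer p n HS)).
rewrite -(blowup_count (Gam p n) (fun i => hubs i) R (fun i b => w i b)).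
apply: eq_bigr => C _; congr (_ * _); last first.
  by apply: eq_bigr => -[i g] _; rewrite hub_forest_count_layer.
by rewrite -(mspanning_tree_inj (@lift_inj _ R p n 0%R) (seg_ram_layer0 R S)) -layer_ramE.
Qed.

Theorem kappa_trivial_layer l : #|R| = l -> 0 < N ->
  kappa (trivial_layer R p n) = kappa X * N ^ (l - 1) * \prod_i w i false ^ N.-1.
Proof.
move=> cardR N_gt0.
rewrite kappa_trivial_layer_sum (kappa_segmentation revK HS) mulnAC !big_distrl /=.
apply: eq_bigr => C _.
have [mstC|] := boolP (mspanning_tree _ R C); last by rewrite !mul0n.
have cardC : #|C| = l - 1.
  by rewrite -cardR; apply: (mspanning_tree_card _ mstC) => i; apply: subsetIr.
rewrite !mul1n (eq_bigr (fun i =>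
  (if i \in C then N else 1) * (w i (i \in C) * w i false ^ N.-1))).
  by rewrite !big_split /= -big_mkcond prod_nat_const cardC mulnC.
by move=> i _; case: (i \in C); rewrite ?mulnA // mul1n -expnS (prednK N_gt0).
Qed.

End KappaLayer.

(* In the first layer the unramified vertex [v] has two distinct lifts, so a
   path joining them starts with a dart leaving [v]. *)
Lemma unram_has_dart (X : graph) (R : {set vtx X}) p v : 1 < p ->
  connectedb [set: drt (trivial_layer R p 1)] -> v \notin R -> exists d, org d = v.
Proof.
move=> p_gt1 /forallP/(_ (lift R 0%R v)) /forallP/(_ (lift R (inord 1) v)) c vR.
case/connectP: c => [[|z q]] /= pth e.
  have /(congr1 val) := lift_unram vR (esym e).
  by rewrite /= inordK // expn1 prednK // ltnW.
case/andP: pth => /adjP[[d g] _ [od _]] _; exists d.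
by move/(congr1 (fun y => (val y).1)): od.
Qed.

Lemma segment_decomposition_segmentation (X : graph) (R : {set vtx X}) k
    (S : 'I_k -> {set drt X}) :
  (forall v, v \notin R -> exists d, org d = v) ->
  segment_decomposition R S -> segmentation R S.
Proof.
move=> darts [[rcS disjS coverS privS] [_ ramS]].
have disj i j d : d \in S i -> d \in S j -> i = j.
  by move=> di dj; apply/eqP/negPn/negP => /disjS/disjointFr/(_ di); rewrite dj.
split => //.
- by move=> i; case/andP: (rcS i).
- move=> i d dR dS; have [j dj] := coverS d.
  by case: (eqVneq i j) => [-> //|/privS/(_ dR dS)]; rewrite in_verts.
- by move=> i; case/orP: (ramS i) => /eqP->.
move=> v /darts[d <-]; have [i di] := coverS d.
by exists i; apply: in_verts.
Qed.

Theorem theorem5p12 (X : graph) (R : {set vtx X}) (p n l k k' : nat)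
    (S : 'I_k -> {set drt X}) :
  prime p ->
  is_graph X ->
  connectedb [set: drt X] ->
  [forall v, ~~ tail R v] ->
  #|R| = l ->
  (forall m : nat, connectedb [set: drt (trivial_layer R p m)]) ->
  segment_decomposition R S ->
  k' <= k ->
  (forall i : 'I_k, (i < k') = (#|seg_ram R (S i)| == 2)) ->
  kappa (trivial_layer R p n) =
    kappa X * p ^ (n * (l - 1)) *
    \prod_(i < k) Fcount (S i) (seg_ram R (S i)) ^ (p ^ n - 1).
Proof.
move=> p_prime [revK _] _ _ cardR layers_conn decS _ _.
have HS : segmentation R S.
  apply: segment_decomposition_segmentation decS => v.
  exact: unram_has_dart (prime_gt1 p_prime) (layers_conn 1).
rewrite (kappa_trivial_layer revK HS cardR) card_ord prednK ?expn_gt0 ?prime_gt0 //.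
by rewrite -expnM !subn1; under [in RHS]eq_bigr do rewrite Fcount_hub_forests.
Qed.
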